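(* Let $A_\bullet$ be a simplicial commutative ring, and let $a,b\in N_n(A)$ and $c\in A_{n-1}$. Then: (1) $s_1s_0(c)\,m(a,b)\in N_{n+1}(A)$; (2) if $d_0(a)c=0=d_0(b)c$, then $s_1s_0(c)\,m(a,b)$ is a cycle; (3) if $d_0(a)c=0$ and $b$ is a boundary, then $s_1s_0(c)\,m(a,b)$ is a boundary.
   Context: For a simplicial ring $A_\bullet$ and $a,b\in A_n$ put $m(a,b)=s_0(a)s_1(b)-s_0(b)s_1(a)\in A_{n+1}$. $N_n(A)=\bigcap_{1\le i\le n}\ker(d_i:A_n\to A_{n-1})$ is the normalized chain complex with differential $d_0$; cycles and boundaries refer to this complex. *)

From HB Require Import structures.
From mathcomp Require Import all_boot all_algebra.
Unset Printing Implicit Defensive.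
Import GRing.Theory.
Local Open Scope ring_scope.

(* Out-of-range indices are unconstrained junk. *)
Record simplicial_comRing := SimplicialComRing {
  A :> nat -> comPzRingType;
  face : forall n : nat, nat -> A n.+1 -> A n;
  degen : forall n : nat, nat -> A n -> A n.+1;
  face_add : forall n i (x y : A n.+1), (i <= n.+1)%N -> face n i (x + y) = face n i x + face n i y;
  face_mul : forall n i (x y : A n.+1), (i <= n.+1)%N -> face n i (x * y) = face n i x * face n i y;
  face_one : forall n i, (i <= n.+1)%N -> face n i (1 : A n.+1) = 1;
  face_opp : forall n i (x : A n.+1), (i <= n.+1)%N -> face n i (- x) = - face n i x;
  degen_add : forall n i (x y : A n), (i <= n)%N -> degen n i (x + y) = degen n i x + degen n i y;
  degen_mul : forall n i (x y : A n), (i <= n)%N -> degen n i (x * y) = degen n i x * degen n i y;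
  degen_one : forall n i, (i <= n)%N -> degen n i (1 : A n) = 1;
  degen_opp : forall n i (x : A n), (i <= n)%N -> degen n i (- x) = - degen n i x;
  face_face : forall n i j (x : A n.+2), (i < j)%N -> (j <= n.+2)%N ->
      face n i (face n.+1 j x) = face n j.-1 (face n.+1 i x);
  face_degen_lt : forall n i j (x : A n.+1), (i < j)%N -> (j <= n.+1)%N ->
      face n.+1 i (degen n.+1 j x) = degen n j.-1 (face n i x);
  face_degen_eq : forall n j (x : A n), (j <= n)%N -> face n j (degen n j x) = x;
  face_degen_succ : forall n j (x : A n), (j <= n)%N -> face n j.+1 (degen n j x) = x;
  face_degen_gt : forall n i j (x : A n.+1), (j.+1 < i)%N -> (i <= n.+2)%N ->
      face n.+1 i (degen n.+1 j x) = degen n j (face n i.-1 x);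
  degen_degen : forall n i j (x : A n), (i <= j)%N -> (j <= n)%N ->
      degen n.+1 i (degen n j x) = degen n.+1 j.+1 (degen n i x)
}.

Arguments face {s} n i _.
Arguments degen {s} n i _.

Section Defs.
Variable S : simplicial_comRing.

Definition mab (n : nat) (a b : S n) : S n.+1 :=
  degen n 0 a * degen n 1 b - degen n 0 b * degen n 1 a.

Definition normalized (n : nat) (x : S n.+1) : Prop :=
  forall i : nat, (0 < i <= n.+1)%N -> face n i x = 0.

Definition is_cycle (n : nat) (x : S n.+1) : Prop :=
  normalized n x /\ face n 0 x = 0.

Definition is_boundary (n : nat) (x : S n.+1) : Prop :=
  exists y : S n.+2, normalized n.+1 y /\ face n.+1 0 y = x.
End Defs.
Arguments mab {S} n a b.
Arguments normalized {S} n x.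
Arguments is_cycle {S} n x.
Arguments is_boundary {S} n x.

(* Since s_1 s_0 = s_0 s_0, multiplying m(a,b) by s_1 s_0(c) is the same as
   replacing a by e = s_0(c) a, which is again normalized, with d_0 e = c d_0 a.
   So everything reduces to three facts about m(e,b) for normalized e, b: it is
   normalized, d_0 m(e,b) = e s_0(d_0 b) - b s_0(d_0 e), and, when d_0 e = 0
   and b = d_0 y, it is the boundary of an explicit element built from
   degeneracies of e and y. *)

From mathcomp Require Import all_boot all_algebra.
From mathcomp Require Import zify.
Local Open Scope ring_scope.
Import GRing.Theory.

Section SimplicialProducts.
Variable S : simplicial_comRing.

Lemma degen0 n i : (i <= n)%N -> degen n i (0 : S n) = 0.
Proof. by move=> le_in; apply: (addrI (degen n i 0)); rewrite -degen_add // !addr0. Qed.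

Lemma face0 n i : (i <= n.+1)%N -> face n i (0 : S n.+1) = 0.
Proof. by move=> le_in; apply: (addrI (face n i 0)); rewrite -face_add // !addr0. Qed.

Lemma faceB n i (x y : S n.+1) :
  (i <= n.+1)%N -> face n i (x - y) = face n i x - face n i y.
Proof. by move=> le_in; rewrite face_add // face_opp. Qed.

Ltac simpl_face_degen := repeat first
  [ rewrite face_degen_eq; [|by []]
  | rewrite face_degen_succ; [|by []]
  | rewrite face_degen_lt; [|by []|by []]
  | rewrite face_degen_gt; [|by []|by []] ].

Lemma normalized_mull n (x a : S n.+1) : normalized n a -> normalized n (x * a).
Proof. by move=> na i /andP[i_gt0 le_in]; rewrite face_mul // na ?i_gt0 // mulr0. Qed.

Lemma face0_degen0_mull n (c : S n) (a : S n.+1) :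
  face n 0 (degen n 0 c * a) = c * face n 0 a.
Proof. by rewrite face_mul // face_degen_eq. Qed.

Lemma degen1_degen0_mab n (c : S n) (a b : S n.+1) :
  degen n.+1 1 (degen n 0 c) * mab n.+1 a b = mab n.+1 (degen n 0 c * a) b.
Proof.
have s1s0E : degen n.+1 1 (degen n 0 c) = degen n.+1 0 (degen n 0 c).
  by rewrite [RHS]degen_degen.
rewrite /mab !degen_mul // mulrBr {1}s1s0E.
by congr (_ - _); [exact: mulrA | exact: mulrCA].
Qed.

Lemma normalized_mab n (a b : S n.+1) :
  normalized n a -> normalized n b -> normalized n.+1 (mab n.+1 a b).
Proof.
move=> na nb i /andP[i_gt0 le_in]; rewrite /mab faceB // !face_mul //.
case: i i_gt0 le_in => [|[|[|i]]] // _ le_in; simpl_face_degen.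
- by rewrite mulrC subrr.
- by rewrite na // nb // degen0 // !mul0r subrr.
- by rewrite na ?nb ?degen0 ?mul0r ?subrr //; lia.
Qed.

Lemma face0_mab n (a b : S n.+1) :
  face n.+1 0 (mab n.+1 a b) = a * degen n 0 (face n 0 b) - b * degen n 0 (face n 0 a).
Proof. by rewrite /mab faceB // !face_mul //; simpl_face_degen. Qed.

Lemma is_cycle_mab n (a b : S n.+1) :
  normalized n a -> normalized n b -> face n 0 a = 0 ->
  a * degen n 0 (face n 0 b) = 0 -> is_cycle n.+1 (mab n.+1 a b).
Proof.
move=> na nb a0 ab0; split; first exact: normalized_mab.
by rewrite face0_mab a0 degen0 // mulr0 subr0.
Qed.

(* d_0 sends the first two terms of the witness to m(a, d_0 y); the third term
   cancels what d_1 leaves of the second, and d_0 kills it since d_0 a = 0. *)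
Lemma is_boundary_mab_face0 n (a : S n.+1) (y : S n.+2) :
  normalized n a -> face n 0 a = 0 -> normalized n.+1 y ->
  is_boundary n.+1 (mab n.+1 a (face n.+1 0 y)).
Proof.
move=> na a0 ny.
exists (degen n.+2 1 (degen n.+1 0 a) * degen n.+2 2 y
        - degen n.+2 1 y * degen n.+2 2 (degen n.+1 0 a)
        + degen n.+2 0 y * degen n.+2 2 (degen n.+1 1 a)).
split; last first.
  rewrite face_add // faceB // !face_mul //; simpl_face_degen.
  by rewrite a0 !degen0 // mulr0 addr0.
move=> i /andP[i_gt0 le_in]; rewrite face_add // faceB // !face_mul //.
case: i i_gt0 le_in => [|[|[|[|i]]]] // _ le_in; simpl_face_degen => /=.
- by rewrite (ny 1) // degen0 // mulr0 sub0r addrC mulrC subrr.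
- by rewrite (ny 1) // degen0 // mul0r addr0 mulrC subrr.
- by rewrite (na 1) // (ny 2) // !degen0 // ?mulr0 ?mul0r subrr addr0.
- by rewrite na ?ny ?degen0 ?mul0r ?mulr0 ?subrr ?addr0 //; lia.
Qed.

End SimplicialProducts.

(* The paper's degree n is n.+1 here: a, b : S n.+1 and c : S n. *)
Theorem lemma3p2 (S : simplicial_comRing) (n : nat) (a b : S n.+1) (c : S n) :
  normalized n a -> normalized n b ->
  let x := degen n.+1 1 (degen n 0 c) * mab n.+1 a b in
  [/\ normalized n.+1 x,
      (face n 0 a * c = 0 -> face n 0 b * c = 0 -> is_cycle n.+1 x)
    & (face n 0 a * c = 0 -> is_boundary n b -> is_boundary n.+1 x)].
Proof.
move=> na nb x; rewrite /x degen1_degen0_mab.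
set e := degen n 0 c * a.
have ne : normalized n e by exact: normalized_mull.
have e0 : face n 0 a * c = 0 -> face n 0 e = 0.
  by rewrite /e face0_degen0_mull mulrC.
split.
- exact: normalized_mab.
- move=> ac0 bc0; apply: is_cycle_mab => //; first exact: e0.
  by rewrite /e mulrAC -degen_mul // [c * _]mulrC bc0 degen0 // mul0r.
- by move=> ac0 [y [ny <-]]; apply: is_boundary_mab_face0 => //; exact: e0.
Qed.
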